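(* For every $n\equiv 7 \pmod{16}$ with $n\geq 23$, there exists an almost 2-perfect maximum 8-cycle packing of $K_n$.
   Context: An 8-cycle packing of $K_n$ on vertex set $\mathcal{X}$ is a triple $(\mathcal{X},\mathcal{C},\mathcal{L})$ with $\mathcal{C}$ a collection of pairwise edge-disjoint 8-cycles of $K_n$ and leave $\mathcal{L}$ the set of edges in no cycle of $\mathcal{C}$; it is maximum if $|\mathcal{L}|$ is minimum among all 8-cycle packings of $K_n$. For an 8-cycle $C$, an inside 8-cycle of $C$ is an 8-cycle on the same vertex set sharing no edge with $C$. The packing is almost 2-perfect if one can choose for each $C\in\mathcal{C}$ an inside 8-cycle $C'$ such that $(\mathcal{X},\{C'\},\mathcal{L})$ is again an 8-cycle packing with the same leave. *)

From HB Require Import structures.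
From mathcomp Require Import all_boot.
Set Implicit Arguments. Unset Strict Implicit. Unset Printing Implicit Defensive.

Definition Kedges (n : nat) : {set {set 'I_n}} := [set e : {set 'I_n} | #|e| == 2].

Definition cyc (n : nat) := 8.-tuple 'I_n.

Definition is_cycle8 n (c : cyc n) : bool := uniq c.

Definition cedges n (c : cyc n) : {set {set 'I_n}} :=
  [set [set tnth c i; tnth c (ordS i)] | i : 'I_8].

Definition cverts n (c : cyc n) : {set 'I_n} := [set x in c].

Definition covered n (C : seq (cyc n)) : {set {set 'I_n}} :=
  \bigcup_(c <- C) cedges c.

Definition is_packing n (C : seq (cyc n)) : Prop :=
  all (@is_cycle8 n) C /\
  pairwise (fun c d => [disjoint cedges c & cedges d]) C.

Definition leave n (C : seq (cyc n)) : {set {set 'I_n}} :=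
  Kedges n :\: covered C.

Definition is_max_packing n (C : seq (cyc n)) : Prop :=
  is_packing C /\
  forall D : seq (cyc n), is_packing D -> #|leave C| <= #|leave D|.

Definition inside n (c c' : cyc n) : Prop :=
  is_cycle8 c' /\ cverts c' = cverts c /\ [disjoint cedges c & cedges c'].

Definition almost_2perfect n (C : seq (cyc n)) : Prop :=
  exists D : seq (cyc n * cyc n),
    map fst D = C /\
    (forall p, p \in D -> inside p.1 p.2) /\
    is_packing (map snd D) /\
    leave (map snd D) = leave C.

(* Write n = 23 + 16k with vertex set {0, ..., 6} together with blocks
   B_j = [7 + 16j, 23 + 16j) for j <= k.  A design is a list of pairs (s, t) of
   8-cycles, t inside s, such that the first cycles and the second cycles both
   decompose the same graph.  K_23 minus a 5-cycle has such a design, and so do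
   K_23 minus K_7 and K_{16,16}; these are checked by computation on small
   labels.  Adding the block B_(k+1) adds exactly a copy of K_23 minus K_7 on
   {0, ..., 6} and B_(k+1), and a copy of K_{16,16} between B_(k+1) and each
   earlier block, so relabelled copies of these designs extend the design.
   The resulting packing leaves 5 edges; since every packing leaves a number of
   edges congruent to 'C(n, 2) modulo 8, it is maximum. *)

From HB Require Import structures.
From mathcomp Require Import all_boot zify.
Set Implicit Arguments. Unset Strict Implicit. Unset Printing Implicit Defensive.

Lemma set2_inj (T : finType) (a b c d : T) :
  [set a; b] = [set c; d] -> (a = c /\ b = d) \/ (a = d /\ b = c).
Proof.
move=> E; have c_ab : c \in [set a; b] by rewrite E set21.
have d_ab : d \in [set a; b] by rewrite E set22.
have /set2P[] : a \in [set c; d] by rewrite -E set21.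
all: have /set2P[] : b \in [set c; d] by rewrite -E set22.
all: move=> Eb Ea; subst a b.
- by case/set2P: d_ab => ->; left.
- by left.
- by right.
- by case/set2P: c_ab => ->; right.
Qed.

Lemma ordS8_neq (i : 'I_8) : (ordS i != i) && (ordS (ordS i) != i).
Proof. by case: i => [[|[|[|[|[|[|[|[|m]]]]]]]] Hi]. Qed.

Section Packings.
Variable n : nat.
Implicit Types (c : cyc n) (C : seq (cyc n)) (L : {set {set 'I_n}}).

Lemma card_cedges c : is_cycle8 c -> #|cedges c| = 8.
Proof.
move=> /tuple_uniqP inj_c; rewrite card_imset ?card_ord // => i j.
move/set2_inj=> [[/inj_c -> //] | [/inj_c Ei /inj_c Ej]].
by have /andP[_] := ordS8_neq i; rewrite Ej -Ei eqxx.
Qed.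

Lemma cedges_subset_Kedges c : is_cycle8 c -> cedges c \subset Kedges n.
Proof.
move=> /tuple_uniqP inj_c; apply/subsetP => _ /imsetP[i _ ->].
rewrite inE cards2; case: (tnth c i =P tnth c (ordS i)) => // /inj_c Ei.
by have /andP[] := ordS8_neq i; rewrite -Ei eqxx.
Qed.

Lemma card_Kedges : #|Kedges n| = 'C(n, 2).
Proof. by rewrite card_draws card_ord. Qed.

Lemma mem_covered C e : (e \in covered C) = has (fun c => e \in cedges c) C.
Proof.
rewrite /covered bigcup_seq; apply/bigcupP/hasP => [[c]|[c]]; by exists c.
Qed.

Lemma disjoint_covered (A : {set {set 'I_n}}) C :
  [disjoint A & covered C] = all (fun c => [disjoint A & cedges c]) C.
Proof.
rewrite /covered bigcup_seq; apply/bigcup_disjointP/allP => [H c|H c]; exact: H.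
Qed.

Lemma card_covered_leqif C : all (@is_cycle8 n) C ->
  #|covered C| <= 8 * size C ?= iff
    pairwise (fun c d => [disjoint cedges c & cedges d]) C.
Proof.
elim: C => [|c C IH] /=; first by rewrite /covered big_nil cards0; apply/leqif_refl.
case/andP=> cyc_c /IH {}IH; rewrite /covered big_cons -/(covered C).
rewrite -disjoint_covered mulnS -{1}(card_cedges cyc_c).
have := leqif_add (leqif_eq (leqnn #|cedges c|)) IH.
by rewrite eqxx; apply: leqif_trans (leq_card_setU _ _).
Qed.

Lemma covered_subset_Kedges C : all (@is_cycle8 n) C -> covered C \subset Kedges n.
Proof.
move=> cycC; apply/subsetP => e; rewrite mem_covered => /hasP[c cC].
exact/subsetP/cedges_subset_Kedges/(allP cycC).
Qed.

Lemma card_leave C : is_packing C -> #|leave C| + 8 * size C = 'C(n, 2).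
Proof.
case=> cycC packC; have card_cov : #|covered C| = 8 * size C.
  by apply/eqP; rewrite (card_covered_leqif cycC).2.
rewrite /leave cardsD (setIidPr (covered_subset_Kedges cycC)) card_Kedges.
rewrite -card_cov subnK //.
by rewrite -card_Kedges subset_leq_card // covered_subset_Kedges.
Qed.

Lemma max_packing_of_small_leave C : is_packing C -> #|leave C| < 8 -> is_max_packing C.
Proof.
move=> packC small; split=> // D packD.
by have := card_leave packC; have := card_leave packD; lia.
Qed.

Lemma covered_packing_of_cover C L :
  all (@is_cycle8 n) C -> Kedges n :\: L \subset covered C ->
  8 * size C + #|L| <= 'C(n, 2) ->
  covered C = Kedges n :\: L /\ is_packing C.
Proof.
move=> cycC sub_cov card_ub; have [le_cov eq_cov] := card_covered_leqif cycC.
have le_compl : 'C(n, 2) - #|L| <= #|Kedges n :\: L|.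
  by rewrite cardsD card_Kedges leq_sub2l // subset_leq_card ?subsetIr.
have card_sub := subset_leq_card sub_cov.
suff covE : covered C = Kedges n :\: L.
  by split=> //; split=> //; rewrite -eq_cov covE; apply/eqP; lia.
by apply/esym/eqP; rewrite eqEcard sub_cov; lia.
Qed.

Lemma max_almost_2perfect_of_cover (D : seq (cyc n * cyc n)) L :
  all (@is_cycle8 n) (map fst D) -> (forall p, p \in D -> inside p.1 p.2) ->
  Kedges n :\: L \subset covered (map fst D) ->
  Kedges n :\: L \subset covered (map snd D) ->
  8 * size D + #|L| <= 'C(n, 2) -> #|L| < 8 ->
  is_max_packing (map fst D) /\ almost_2perfect (map fst D).
Proof.
move=> cyc1 insideD cov1 cov2 card_ub small.
have cyc2 : all (@is_cycle8 n) (map snd D).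
  by apply/allP => _ /mapP[p pD ->]; case: (insideD p pD).
have ub1 : 8 * size (map fst D) + #|L| <= 'C(n, 2) by rewrite size_map.
have ub2 : 8 * size (map snd D) + #|L| <= 'C(n, 2) by rewrite size_map.
have [covE1 pack1] := covered_packing_of_cover cyc1 cov1 ub1.
have [covE2 pack2] := covered_packing_of_cover cyc2 cov2 ub2.
split; last by exists D; rewrite /leave covE1 covE2.
apply: max_packing_of_small_leave => //; apply: leq_ltn_trans small.
by rewrite /leave covE1 setDDr setDv set0U subset_leq_card ?subsetIr.
Qed.

End Packings.

Definition edge8 (s : seq nat) (i : nat) : nat * nat := (nth 0 s i, nth 0 s (i.+1 %% 8)).

Definition adj8 (s : seq nat) (x y : nat) : bool :=
  (size s == 8) && has (fun i => (edge8 s i == (x, y)) || (edge8 s i == (y, x))) (iota 0 8).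

Definition inside_seq (m : nat) (s t : seq nat) : bool :=
  [&& size s == 8, uniq s, all (fun x => x < m) s, perm_eq s t &
      all (fun i => ~~ adj8 t (edge8 s i).1 (edge8 s i).2) (iota 0 8)].

Definition dcovers (T : seq (seq nat * seq nat)) (x y : nat) : bool :=
  has (fun p => adj8 p.1 x y) T && has (fun p => adj8 p.2 x y) T.

Section SeqCycles.
Variable N : nat.
Local Notation n := N.+1.

Definition cyc_of_seq (s : seq nat) : cyc n := [tuple inord (nth 0 s i) | i < 8].

Definition edge_set (L : seq (nat * nat)) : {set {set 'I_n}} :=
  [set e in [seq [set inord p.1; inord p.2] | p <- L]].

Lemma cedges_cyc_of_seq s :
  cedges (cyc_of_seq s) = [set [set inord (edge8 s i).1; inord (edge8 s i).2] | i : 'I_8].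
Proof. by apply: eq_imset => i; rewrite !tnth_mktuple. Qed.

Lemma adj8_cedges s x y : adj8 s x y -> [set inord x; inord y] \in cedges (cyc_of_seq s).
Proof.
case/andP=> _ /hasP[i /[!mem_iota] /= i_lt /orP[] /eqP[<- <-]].
all: rewrite cedges_cyc_of_seq; apply/imsetP; exists (Ordinal i_lt) => //.
exact: setUC.
Qed.

Lemma cedges_adj8 s x y : size s = 8 -> all (fun z => z < n) s -> x < n -> y < n ->
  [set inord x; inord y] \in cedges (cyc_of_seq s) -> adj8 s x y.
Proof.
move=> size_s lt_s x_lt y_lt; rewrite cedges_cyc_of_seq /adj8 size_s eqxx.
have lt_nth j : nth 0 s j < n.
  by case: (ltnP j (size s)) => [/(mem_nth 0)/(allP lt_s)|/(nth_default 0) ->].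
case/imsetP=> i _ /set2_inj E; apply/hasP; exists (val i); first by rewrite mem_iota ltn_ord.
rewrite /edge8 /=.
case: E => [[]|[]] /(congr1 (@nat_of_ord _)) + /(congr1 (@nat_of_ord _)).
  by rewrite !inordK ?lt_nth // => -> ->; rewrite eqxx.
by rewrite !inordK ?lt_nth // => -> ->; rewrite eqxx orbT.
Qed.

Lemma cyc_of_seq_uniq s : size s = 8 -> uniq s -> all (fun z => z < n) s ->
  is_cycle8 (cyc_of_seq s).
Proof.
move=> size_s uniq_s lt_s; apply/tuple_uniqP => i j; rewrite !tnth_mktuple.
have lt_nth (k : 'I_8) : nth 0 s k < n by apply/(allP lt_s)/mem_nth; rewrite size_s.
move/(congr1 (@nat_of_ord _)); rewrite !inordK // => /eqP.
by rewrite nth_uniq ?size_s // => /eqP/val_inj.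
Qed.

Lemma mem_cyc_of_seq s (x : 'I_n) : size s = 8 -> all (fun z => z < n) s ->
  (x \in cyc_of_seq s) = (nat_of_ord x \in s).
Proof.
move=> size_s lt_s; apply/tnthP/idP => [[i ->] | x_s].
  have nth_s : nth 0 s i \in s by rewrite mem_nth ?size_s.
  by rewrite tnth_mktuple inordK //; apply: (allP lt_s).
have i_lt : index (nat_of_ord x) s < 8 by rewrite -size_s index_mem.
by exists (Ordinal i_lt); rewrite tnth_mktuple /= nth_index // inord_val.
Qed.

Lemma inside_cyc_of_seq s t : inside_seq n s t -> inside (cyc_of_seq s) (cyc_of_seq t).
Proof.
case/and5P=> /eqP size_s uniq_s lt_s perm_st /allP not_adj.
have size_t : size t = 8 by rewrite -(perm_size perm_st).
have lt_t : all (fun z => z < n) t by rewrite -(perm_all _ perm_st).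
split; first by rewrite cyc_of_seq_uniq // -(perm_uniq perm_st).
split; first by apply/setP => x; rewrite !inE !mem_cyc_of_seq // (perm_mem perm_st).
rewrite -setI_eq0; apply/eqP/setP => e; rewrite !inE cedges_cyc_of_seq.
apply/negP => /andP[/imsetP[i _ ->]].
have lt_nth (j : 'I_8) : nth 0 s j < n by apply/(allP lt_s)/mem_nth; rewrite size_s.
move/(cedges_adj8 size_t lt_t (lt_nth i) (lt_nth (ordS i))); apply/negP/not_adj.
by rewrite mem_iota ltn_ord.
Qed.

Lemma covered_cover (Q : seq (seq nat)) (L : seq (nat * nat)) :
  (forall x y, x < y < n -> (x, y) \notin L -> has (fun s => adj8 s x y) Q) ->
  Kedges n :\: edge_set L \subset covered (map cyc_of_seq Q).
Proof.
move=> covQ; apply/subsetP => _ /setDP[/[!inE] /cards2P[a [b [ab ->]]] notL].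
wlog lt_ab : a b ab notL / a < b.
  move=> wlog_ab; case: (ltngtP a b) => [| lt_ba | /val_inj eq_ab]; first exact: wlog_ab.
    by rewrite setUC; apply: wlog_ab; rewrite // 1?eq_sym // setUC.
  by rewrite eq_ab eqxx in ab.
have /hasP[s sQ adj_s] : has (fun s => adj8 s a b) Q.
  apply: covQ; first by rewrite lt_ab ltn_ord.
  by apply: contra notL => abL; apply/mapP; exists (val a, val b); rewrite //= !inord_val.
rewrite mem_covered has_map; apply/hasP; exists s => //=.
by have := adj8_cedges adj_s; rewrite !inord_val.
Qed.

Lemma design_max_almost_2perfect (T : seq (seq nat * seq nat)) (L : seq (nat * nat)) :
  all (fun p => inside_seq n p.1 p.2) T ->
  8 * size T + size L <= 'C(n, 2) -> size L < 8 ->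
  (forall x y, x < y < n -> (x, y) \notin L -> dcovers T x y) ->
  exists C : seq (cyc n), is_max_packing C /\ almost_2perfect C.
Proof.
move=> insideT card_ub small covT.
pose D := [seq (cyc_of_seq p.1, cyc_of_seq p.2) | p <- T].
have fstD : map fst D = map cyc_of_seq (map fst T) by rewrite -!map_comp.
have sndD : map snd D = map cyc_of_seq (map snd T) by rewrite -!map_comp.
have card_L : #|edge_set L| <= size L.
  by rewrite cardsE; apply: leq_trans (card_size _) _; rewrite size_map.
exists (map fst D); apply: (max_almost_2perfect_of_cover (L := edge_set L)).
- apply/allP => _ /mapP[_ /mapP[p /(allP insideT) /and5P[/eqP size_s uniq_s lt_s _ _] ->] ->].
  exact: cyc_of_seq_uniq.
- by move=> _ /mapP[p /(allP insideT) ins_p ->]; exact: inside_cyc_of_seq.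
- rewrite fstD; apply: covered_cover => x y xy notL.
  by case/andP: (covT x y xy notL) => /hasP[p pT adj_p] _; rewrite has_map; apply/hasP; exists p.
- rewrite sndD; apply: covered_cover => x y xy notL.
  by case/andP: (covT x y xy notL) => _ /hasP[p pT adj_p]; rewrite has_map; apply/hasP; exists p.
- by rewrite size_map; lia.
- lia.
Qed.

End SeqCycles.

Definition relabel (f : nat -> nat) (p : seq nat * seq nat) : seq nat * seq nat :=
  (map f p.1, map f p.2).

Lemma adj8_map f s x y : injective f -> adj8 (map f s) (f x) (f y) = adj8 s x y.
Proof.
move=> inj_f; rewrite /adj8 size_map; case: eqP => // size_s.
apply: eq_in_has => i /[!mem_iota] /= i_lt.
by rewrite /edge8 !(nth_map 0) ?size_s ?ltn_pmod // !xpair_eqE !inj_eq.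
Qed.

Lemma inside_seq_map f m m' s t : injective f -> {homo f : x / x < m >-> x < m'} ->
  inside_seq m s t -> inside_seq m' (map f s) (map f t).
Proof.
move=> inj_f f_lt /and5P[/eqP size_s uniq_s lt_s perm_st /allP not_adj].
apply/and5P; split.
- by rewrite size_map size_s.
- by rewrite map_inj_uniq.
- by rewrite all_map; apply/allP => x /(allP lt_s) /f_lt.
- exact: perm_map.
apply/allP => i i_in; have /[!mem_iota] /= i_lt := i_in.
by rewrite /edge8 !(nth_map 0) ?size_s ?ltn_pmod // adj8_map //; apply: not_adj.
Qed.

Lemma inside_seq_widen m m' s t : m <= m' -> inside_seq m s t -> inside_seq m' s t.
Proof.
move=> le_mm' /and5P[size_s uniq_s lt_s perm_st not_adj]; apply/and5P; split=> //.
by apply/allP => x /(allP lt_s) /leq_trans; apply.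
Qed.

Lemma dcovers_relabel f T x y : injective f ->
  dcovers (map (relabel f) T) (f x) (f y) = dcovers T x y.
Proof.
by move=> inj_f; rewrite /dcovers !has_map /= !(eq_has (fun p => adj8_map _ _ _ inj_f)).
Qed.

Lemma dcovers_sub T T' x y : {subset T <= T'} -> dcovers T x y -> dcovers T' x y.
Proof.
move=> sub_T /andP[/hasP[p /sub_T p_T adj_p] /hasP[q /sub_T q_T adj_q]].
by apply/andP; split; apply/hasP; [exists p | exists q].
Qed.

(* The two cycles of a crown decompose K_{4,4} on {a, ..., a+3} and {b, ..., b+3}. *)
Definition crown (a b : nat) : seq nat * seq nat :=
  ([:: a; b; a + 1; b + 1; a + 2; b + 2; a + 3; b + 3],
   [:: a; b + 1; a + 3; b; a + 2; b + 3; a + 1; b + 2]).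

Definition design_K44 (a b : nat) : seq (seq nat * seq nat) :=
  [:: crown a b; ((crown a b).2, (crown a b).1)].

Definition design_K46 (b : nat) : seq (seq nat * seq nat) :=
  [:: crown b 0;
      ([:: b; 4; b + 1; 5; b + 2; 0; b + 3; 1], [:: b; 0; b + 1; 1; b + 2; 4; b + 3; 5]);
      crown b 2].

(* A cyclic design of K_17 on {6, ..., 22}, developed from one base pair modulo 17. *)
Definition design_K17 : seq (seq nat * seq nat) :=
  [seq relabel (fun x => 6 + (x + i) %% 17)
     ([:: 0; 3; 1; 5; 4; 10; 2; 7], [:: 0; 5; 2; 4; 3; 7; 1; 10]) | i <- iota 0 17].

Definition leave_C5 : seq (nat * nat) := [:: (0, 1); (1, 2); (2, 3); (3, 4); (0, 4)].

Definition design_K23_C5 : seq (seq nat * seq nat) :=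
  design_K17 ++ flatten [seq design_K46 b | b <- [:: 11; 15; 19]] ++
  [:: ([:: 0; 2; 10; 5; 7; 1; 4; 9], [:: 0; 5; 1; 9; 2; 7; 4; 10]);
      ([:: 0; 3; 7; 4; 5; 9; 1; 8], [:: 0; 7; 1; 4; 8; 5; 3; 9]);
      ([:: 0; 5; 8; 2; 6; 3; 1; 10], [:: 0; 2; 5; 10; 3; 8; 1; 6]);
      ([:: 0; 6; 5; 3; 8; 4; 2; 7], [:: 0; 3; 7; 5; 4; 6; 2; 8]);
      ([:: 1; 5; 2; 9; 3; 10; 4; 6], [:: 1; 3; 6; 5; 9; 4; 2; 10])].

Definition design_K23_K7 : seq (seq nat * seq nat) :=
  design_K17 ++ flatten [seq design_K46 b | b <- [:: 7; 11; 15; 19]].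

Definition design_K16_16 : seq (seq nat * seq nat) :=
  flatten [seq design_K44 (4 * a) (16 + 4 * b) | a <- iota 0 4, b <- iota 0 4].

Lemma all_all_iota m (P : nat -> nat -> bool) :
  all (fun x => all (P x) (iota 0 m)) (iota 0 m) -> forall x y, x < m -> y < m -> P x y.
Proof.
move=> /allP allP2 x y x_lt y_lt.
by apply: (allP (allP2 x _)); rewrite mem_iota.
Qed.

Lemma K23_C5_inside : all (fun p => inside_seq 23 p.1 p.2) design_K23_C5.
Proof. by vm_compute. Qed.

Lemma K23_K7_inside : all (fun p => inside_seq 23 p.1 p.2) design_K23_K7.
Proof. by vm_compute. Qed.

Lemma K16_16_inside : all (fun p => inside_seq 32 p.1 p.2) design_K16_16.
Proof. by vm_compute. Qed.

Lemma K23_C5_covers x y : x < y < 23 -> (x, y) \notin leave_C5 -> dcovers design_K23_C5 x y.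
Proof.
move=> /andP[lt_xy lt_y] notL.
have /all_all_iota/(_ x y) : all (fun x => all (fun y =>
    (x < y) ==> ((x, y) \notin leave_C5) ==> dcovers design_K23_C5 x y) (iota 0 23)) (iota 0 23).
  by vm_compute.
by rewrite lt_xy notL; apply; rewrite // (ltn_trans lt_xy lt_y).
Qed.

Lemma K23_K7_covers x y : x < y < 23 -> 7 <= y -> dcovers design_K23_K7 x y.
Proof.
move=> /andP[lt_xy lt_y] le_7y.
have /all_all_iota/(_ x y) : all (fun x => all (fun y =>
    (x < y) ==> (7 <= y) ==> dcovers design_K23_K7 x y) (iota 0 23)) (iota 0 23).
  by vm_compute.
by rewrite lt_xy le_7y; apply; rewrite // (ltn_trans lt_xy lt_y).
Qed.

Lemma K16_16_covers x y : x < 16 <= y -> y < 32 -> dcovers design_K16_16 x y.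
Proof.
move=> /andP[lt_x16 le_16y] lt_y.
have /all_all_iota/(_ x y) : all (fun x => all (fun y =>
    (x < 16 <= y) ==> dcovers design_K16_16 x y) (iota 0 32)) (iota 0 32).
  by vm_compute.
by rewrite lt_x16 le_16y; apply; rewrite // (ltn_trans lt_x16).
Qed.

Definition attach (j u : nat) : nat := if u < 7 then u else u + 16 * j.

Definition join_blocks (i j u : nat) : nat :=
  if u < 16 then 7 + 16 * i + u else 7 + 16 * j + (u - 16).

Lemma attach_inj j : injective (attach j).
Proof. by move=> u v; rewrite /attach; case: (ltnP u 7); case: (ltnP v 7); lia. Qed.

Lemma join_blocks_inj i j : i < j -> injective (join_blocks i j).
Proof.
by move=> lt_ij u v; rewrite /join_blocks; case: (ltnP u 16); case: (ltnP v 16); lia.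
Qed.

Fixpoint design (k : nat) : seq (seq nat * seq nat) :=
  if k is k'.+1 then
    design k' ++ map (relabel (attach k)) design_K23_K7 ++
      [seq relabel (join_blocks i k) p | i <- iota 0 k, p <- design_K16_16]
  else design_K23_C5.

Lemma design_succ k : design k.+1 = design k ++ map (relabel (attach k.+1)) design_K23_K7 ++
  [seq relabel (join_blocks i k.+1) p | i <- iota 0 k.+1, p <- design_K16_16].
Proof. by []. Qed.

Lemma size_design k : 8 * size (design k) + size leave_C5 = 'C(23 + 16 * k, 2).
Proof.
elim: k => [|k IH]; first by [].
rewrite design_succ 2!size_cat size_map size_allpairs size_iota !mulnDr addnAC IH !bin2.
have -> : size design_K23_K7 = 29 by [].
have -> : size design_K16_16 = 32 by [].
lia.
Qed.

Lemma design_inside k : all (fun p => inside_seq (23 + 16 * k) p.1 p.2) (design k).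
Proof.
elim: k => [|k IH]; first exact: K23_C5_inside.
rewrite design_succ 2!all_cat; apply/and3P; split.
- apply/allP => p /(allP IH); apply: inside_seq_widen; lia.
- rewrite all_map; apply/allP => p /(allP K23_K7_inside) /=.
  by apply: inside_seq_map; [exact: attach_inj | move=> u; rewrite /attach; case: (ltnP u 7); lia].
- apply/allP => _ /allpairsP[[i p] [/[!mem_iota] /= lt_i /(allP K16_16_inside) ins_p ->]].
  apply: inside_seq_map ins_p; first exact: join_blocks_inj.
  by move=> u; rewrite /join_blocks; case: (ltnP u 16); lia.
Qed.

Lemma design_covers k x y : x < y < 23 + 16 * k -> (x, y) \notin leave_C5 ->
  dcovers (design k) x y.
Proof.
elim: k => [|k IH] in x y *; first exact: K23_C5_covers.
move=> /andP[lt_xy lt_y] notL; rewrite design_succ.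
have [y_old | y_new] := ltnP y (23 + 16 * k).
  apply: dcovers_sub (IH x y _ notL); last by rewrite lt_xy.
  by move=> p p_in; rewrite mem_cat p_in.
have glue_sub : {subset map (relabel (attach k.+1)) design_K23_K7 <= design k ++
    map (relabel (attach k.+1)) design_K23_K7 ++
    [seq relabel (join_blocks i k.+1) p | i <- iota 0 k.+1, p <- design_K16_16]}.
  by move=> p p_in; rewrite mem_cat (mem_cat p) p_in orbT.
have y_attach : y = attach k.+1 (y - 16 * k.+1) by rewrite /attach ifF; lia.
have [x_new | x_old] := leqP (23 + 16 * k) x.
  have -> : x = attach k.+1 (x - 16 * k.+1) by rewrite /attach ifF; lia.
  rewrite y_attach; apply: dcovers_sub glue_sub _.
  by rewrite dcovers_relabel; [apply: K23_K7_covers; lia | exact: attach_inj].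
have [x_hub | x_block] := ltnP x 7.
  have -> : x = attach k.+1 x by rewrite /attach x_hub.
  rewrite y_attach; apply: dcovers_sub glue_sub _.
  by rewrite dcovers_relabel; [apply: K23_K7_covers; lia | exact: attach_inj].
set i := (x - 7) %/ 16; have lt_i : i < k.+1 by rewrite ltn_divLR //; lia.
apply: (@dcovers_sub (map (relabel (join_blocks i k.+1)) design_K16_16)).
  move=> _ /mapP[p p_in ->]; rewrite mem_cat (mem_cat _ (map _ _)).
  apply/orP; right; apply/orP; right.
  by apply: (allpairs_f (fun i => relabel (join_blocks i k.+1))); rewrite // mem_iota.
have -> : x = join_blocks i k.+1 ((x - 7) %% 16).
  by rewrite /join_blocks ifT ?ltn_mod // /i; have := divn_eq (x - 7) 16; lia.
have -> : y = join_blocks i k.+1 (y + 9 - 16 * k.+1) by rewrite /join_blocks ifF; lia.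
rewrite dcovers_relabel; [apply: K16_16_covers; rewrite ?ltn_mod; lia | exact: join_blocks_inj].
Qed.

Theorem lemma3p4 (n : nat) :
  n %% 16 = 7 -> 23 <= n ->
  exists C : seq (cyc n), is_max_packing C /\ almost_2perfect C.
Proof.
move=> n_mod n_ge; have [k ->] : exists k, n = 23 + 16 * k.
  by exists (n %/ 16 - 1); have := divn_eq n 16; lia.
apply: (@design_max_almost_2perfect (22 + 16 * k) (design k) leave_C5).
- exact: design_inside.
- by rewrite size_design.
- by [].
- exact: design_covers.
Qed.
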